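(* There is an absolute constant $c>0$ such that for every $n$, every $\epsilon\in(0,1)$ and every symmetric PSD $A\in\mathbb{R}^{n\times n}$ with $\max_{i,j}|A_{ij}|\le 1$, Algorithm E run with $p=\min(1, \frac{c}{\epsilon n})$ returns, with probability at least $3/4$, a unit vector $u\in\mathbb{R}^n$ with $u^TAu \ge \lambda_1(A) - \epsilon n$, where $\lambda_1(A)$ is the largest eigenvalue of $A$.
   Context: Algorithm E: include each column index $i\in[n]$ independently with probability $p$; let $S\in\mathbb{R}^{n\times m}$ be the matrix whose columns are the standard basis vectors $e_i$ of the included indices. Query the columns $AS$ of $A$, and from $AS$ and $S$ compute $S^TAS$ and $S^TA^2S=(AS)^T(AS)$. If $S^TAS = 0$, return an arbitrary unit vector. Otherwise find $x\in\mathbb{R}^m$ with $x^TS^TASx>0$ maximizing $\frac{x^TS^TA^2Sx}{x^TS^TASx}$, and return $u = \frac{ASx}{\|ASx\|_2}$. *)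

From HB Require Import structures.
From mathcomp Require Import all_boot all_order all_algebra.
From mathcomp Require Import boolp classical_sets reals.
Set Implicit Arguments. Unset Strict Implicit. Unset Printing Implicit Defensive.
Import Order.TTheory GRing.Theory Num.Theory.
Local Open Scope ring_scope.

Definition qf (R : realType) (k : nat) (M : 'M[R]_k) (x : 'cV[R]_k) : R :=
  (x^T *m M *m x) 0 0.

Definition vnorm (R : realType) (k : nat) (v : 'cV[R]_k) : R :=
  Num.sqrt ((v^T *m v) 0 0).

Definition lambda1 (R : realType) (n : nat) (A : 'M[R]_n) : R :=
  sup [set a : R | eigenvalue A a].

(* Sampling matrix S : n x m whose columns are the e_i, i in T (increasing order). *)
Definition sampleMx (R : realType) (n : nat) (T : {set 'I_n}) : 'M[R]_(n, #|T|) :=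
  \matrix_(i < n, j < #|T|) (i == enum_val j)%:R.

(* u is a possible output of Algorithm E on A when the sampled index set is T. *)
Definition algE_output (R : realType) (n : nat) (A : 'M[R]_n)
    (T : {set 'I_n}) (u : 'cV[R]_n) : Prop :=
  let S := sampleMx R T in
  let C := S^T *m A *m S in
  let B := (A *m S)^T *m (A *m S) in
  if C == 0 then vnorm u = 1
  else exists x : 'cV[R]_#|T|,
      [/\ 0 < qf C x,
          (forall y : 'cV[R]_#|T|, 0 < qf C y -> qf B y / qf C y <= qf B x / qf C x)
        & u = (vnorm (A *m S *m x))^-1 *: (A *m S *m x)].

(* probability that the index set drawn (each index independently w.p. p) satisfies P *)
Definition probSample (R : realType) (n : nat) (p : R) (P : {set 'I_n} -> bool) : R :=
  \sum_(T : {set 'I_n} | P T) p ^+ #|T| * (1 - p) ^+ (n - #|T|).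

From HB Require Import structures.
From mathcomp Require Import all_boot all_order all_algebra.
From mathcomp Require Import boolp classical_sets reals.
From mathcomp Require Import ring lra.
Import Order.TTheory GRing.Theory Num.Theory.
Set Implicit Arguments. Unset Strict Implicit.
Local Open Scope ring_scope.

(* Fix a unit eigenvector v of A whose eigenvalue a exceeds λ₁(A) − εn/2, and let
   z = S Sᵀ v be its restriction to the sampled coordinates. As z lies in the range
   searched by Algorithm E, Cauchy–Schwarz (for the form of A, then against v) gives
   uᵀAu ≥ |Az|²/zᵀAz ≥ (a q)²/zᵀAz with q = vᵀz, and zᵀAz = a q² + W with W ≥ 0
   since A − a v vᵀ is positive semidefinite. Hence uᵀAu ≥ a − εn/2 as soon as
   q > p/2 and W ≤ εn q²/2. Markov's inequality bounds the failure probability: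
   E q = p, Var q = p(1−p) Σ v_i⁴ and E W = p(1−p) Σ (A_ii v_i² − a v_i⁴), and
   a v_i² ≤ A_ii ≤ 1 bounds these by p(1−p)/a and p(1−p); with c = 64 the total is
   at most 1/4. *)

Section BilinearForm.
Variables (R : realType) (n : nat).
Implicit Types (M : 'M[R]_n) (w x y z : 'cV[R]_n).

Definition bform M x y : R := (x^T *m M *m y) 0 0.

Lemma qfE M x : qf M x = bform M x x.
Proof. by []. Qed.

Lemma bformC M x y : M^T = M -> bform M x y = bform M y x.
Proof.
move=> M_sym; rewrite /bform.
have -> : (x^T *m M *m y) 0 0 = ((x^T *m M *m y)^T) 0 0 by rewrite [RHS]mxE.
by rewrite !trmx_mul trmxK M_sym mulmxA.
Qed.

Lemma bformDl M x y z : bform M (x + y) z = bform M x z + bform M y z.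
Proof. by rewrite /bform linearD /= !mulmxDl mxE. Qed.

Lemma bformDr M x y z : bform M x (y + z) = bform M x y + bform M x z.
Proof. by rewrite /bform mulmxDr mxE. Qed.

Lemma bformZl M t x y : bform M (t *: x) y = t * bform M x y.
Proof. by rewrite /bform linearZ /= -!scalemxAl mxE. Qed.

Lemma bformZr M t x y : bform M x (t *: y) = t * bform M x y.
Proof. by rewrite /bform -scalemxAr mxE. Qed.

Lemma bformE M x y : bform M x y = \sum_i \sum_j x i 0 * M i j * y j 0.
Proof.
rewrite /bform mxE exchange_big /=; apply: eq_bigr => j _.
by rewrite mxE mulr_suml; apply: eq_bigr => i _; rewrite mxE.
Qed.

Lemma bform1E x y : bform 1%:M x y = \sum_i x i 0 * y i 0.
Proof. by rewrite /bform mulmx1 mxE; apply: eq_bigr => i _; rewrite mxE. Qed.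

Lemma bform_mull M x y : bform M x y = bform 1%:M (M^T *m x) y.
Proof. by rewrite /bform mulmx1 trmx_mul trmxK. Qed.

Lemma bform1_ge0 x : 0 <= bform 1%:M x x.
Proof. by rewrite bform1E; apply: sumr_ge0 => i _; rewrite -expr2 sqr_ge0. Qed.

Lemma bform1_eq0 x : (bform 1%:M x x == 0) = (x == 0).
Proof.
apply/idP/eqP => [|->]; last by rewrite /bform mulmx0 mxE.
rewrite bform1E; under eq_bigr do rewrite -expr2; move=> /eqP x0.
apply/matrixP => i k; rewrite ord1 mxE.
have := psumr_eq0P (fun i _ => sqr_ge0 (x i 0)) x0 (i := i) isT.
by move/eqP; rewrite sqrf_eq0 => /eqP.
Qed.

Lemma vnormE x : vnorm x = Num.sqrt (bform 1%:M x x).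
Proof. by rewrite /vnorm /bform mulmx1. Qed.

Lemma qf_addZ M x y t : M^T = M ->
  qf M (y + t *: x) = qf M y + 2 * t * bform M x y + t ^+ 2 * qf M x.
Proof.
move=> M_sym; rewrite !qfE bformDl !bformDr !bformZl !bformZr (bformC y x M_sym).
ring.
Qed.

Lemma bform_sqr_le M x y : M^T = M -> (forall w, 0 <= qf M w) -> 0 < qf M x ->
  bform M x y ^+ 2 <= qf M x * qf M y.
Proof.
move=> M_sym M_psd x_pos.
have := M_psd (y + (- bform M x y / qf M x) *: x).
rewrite qf_addZ //; set b := bform M x y; set c := qf M x; set d := qf M y.
have -> : d + 2 * (- b / c) * b + (- b / c) ^+ 2 * c = d - b ^+ 2 / c.
  by field; rewrite gt_eqF.
by rewrite subr_ge0 ler_pdivrMr // mulrC.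
Qed.

Lemma bform1_sqr_le x y : bform 1%:M x y ^+ 2 <= bform 1%:M x x * bform 1%:M y y.
Proof.
have [->|x_neq0] := eqVneq x 0; first by rewrite /bform !(linear0, mul0mx) mxE expr0n mul0r.
apply: bform_sqr_le; first by rewrite trmx1.
  by move=> w; exact: bform1_ge0.
by rewrite qfE lt_def bform1_eq0 x_neq0 bform1_ge0.
Qed.

Lemma qf_normalize M w : qf M ((vnorm w)^-1 *: w) = qf M w / bform 1%:M w w.
Proof.
rewrite !qfE bformZl bformZr mulrA -expr2 exprVn vnormE sqr_sqrtr ?bform1_ge0 //.
by rewrite mulrC.
Qed.

Lemma vnorm_normalize w : w != 0 -> vnorm ((vnorm w)^-1 *: w) = 1.
Proof.
move=> w_neq0; rewrite vnormE -qfE qf_normalize qfE divff ?sqrtr1 //.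
by rewrite bform1_eq0.
Qed.

Lemma qf_gt0_mulmx_neq0 M z : 0 < qf M z -> M *m z != 0.
Proof.
apply: contraTneq => Mz0; rewrite qfE /bform -mulmxA Mz0 mulmx0 mxE.
by rewrite ltxx.
Qed.

End BilinearForm.

Section UnitEigenvector.
Variables (R : realType) (n : nat) (A : 'M[R]_n).
Hypothesis A_sym : A^T = A.

Lemma eigenvalue_unit_eigenvector a : eigenvalue A a ->
  exists v : 'cV[R]_n, A *m v = a *: v /\ bform 1%:M v v = 1.
Proof.
case/eigenvalueP => r r_eigen r_neq0.
have c_eigen : A *m r^T = a *: r^T by rewrite -{1}A_sym -trmx_mul r_eigen linearZ.
have c_gt0 : 0 < bform 1%:M r^T r^T.
  by rewrite lt_def bform1_ge0 bform1_eq0 -(inj_eq (@trmx_inj _ _ _)) trmxK linear0 r_neq0.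
set s := bform 1%:M r^T r^T in c_gt0.
exists ((Num.sqrt s)^-1 *: r^T); split; first by rewrite -scalemxAr c_eigen !scalerA mulrC.
rewrite bformZl bformZr -/s mulrA -expr2 exprVn sqr_sqrtr ?ltW //.
by rewrite mulVf ?gt_eqF.
Qed.

Hypothesis A_psd : forall x, 0 <= qf A x.
Variables (a : R) (v : 'cV[R]_n).
Hypotheses (v_eigen : A *m v = a *: v) (v_unit : bform 1%:M v v = 1).

Lemma bform_eigenr y : bform A y v = a * bform 1%:M y v.
Proof. by rewrite /bform -mulmxA v_eigen mulmx1 -scalemxAr mxE. Qed.

Lemma sum_eigen_coord_sqr : \sum_i v i 0 ^+ 2 = 1.
Proof. by rewrite -v_unit bform1E; apply: eq_bigr => i _; rewrite expr2. Qed.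

(* Write x = x' + <v,x> v with x' orthogonal to v, so that qf A x = qf A x' + a <v,x>^2. *)
Lemma eigen_bform_sqr_le x : a * bform 1%:M v x ^+ 2 <= qf A x.
Proof.
set t := bform 1%:M v x.
have one_sym : (1%:M : 'M[R]_n)^T = 1%:M by rewrite trmx1.
rewrite -[x](subrK (t *: v)) -scaleNr qf_addZ // (bformC _ _ A_sym) bform_eigenr.
rewrite (bformC _ _ one_sym) bformDr bformZr v_unit (qfE A v) bform_eigenr v_unit -/t.
have := A_psd (x + - t *: v); lra.
Qed.

Lemma eigen_coord_sqr_le_diag i : a * v i 0 ^+ 2 <= A i i.
Proof.
have := eigen_bform_sqr_le (delta_mx i 0).
by rewrite qfE /bform mulmx1 trmx_delta -!colE -rowE !mxE.
Qed.

Hypothesis A_bounded : forall i j, `|A i j| <= 1.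

Lemma diag_le1 i : A i i <= 1.
Proof. exact: le_trans (ler_norm _) (A_bounded i i). Qed.

Lemma eigenvalue_le_dim : a <= n%:R.
Proof.
have -> : n%:R = \sum_(i < n) (1 : R) by rewrite sumr_const card_ord.
rewrite -[a]mulr1 -[X in a * X]sum_eigen_coord_sqr mulr_sumr.
by apply: ler_sum => i _; exact: le_trans (eigen_coord_sqr_le_diag i) (diag_le1 i).
Qed.

End UnitEigenvector.

Definition restrict (R : realType) (n : nat) (T : {set 'I_n}) (v : 'cV[R]_n) : 'cV[R]_n :=
  \col_i ((i \in T)%:R * v i 0).

Lemma sampleMx_restrict (R : realType) (n : nat) (T : {set 'I_n}) (v : 'cV[R]_n) :
  sampleMx R T *m ((sampleMx R T)^T *m v) = restrict T v.
Proof.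
apply/matrixP => i k; rewrite ord1 !mxE.
transitivity (\sum_(j < #|T|) (i == enum_val j)%:R * v (enum_val j) 0).
  apply: eq_bigr => j _; rewrite !mxE; congr (_ * _).
  rewrite (bigD1 (enum_val j)) //= !mxE eqxx mul1r big1 ?addr0 //.
  by move=> l /negbTE l_neq; rewrite !mxE l_neq mul0r.
rewrite -(big_enum_val (fun x => (i == x)%:R * v x 0)) /= big_mkcond /=.
rewrite (bigD1 i) //= eqxx mul1r big1 ?addr0; first by case: (i \in T); rewrite ?mul1r ?mul0r.
by move=> l l_neq; rewrite eq_sym (negbTE l_neq) mul0r; case: ifP.
Qed.

Section RayleighQuotient.
Variables (R : realType) (n : nat) (A : 'M[R]_n).
Hypotheses (A_sym : A^T = A) (A_psd : forall x, 0 <= qf A x).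

(* Cauchy-Schwarz for the form of A applied to z and A z, using zᵀA(Az) = |Az|². *)
Lemma rayleigh_image_ge z : 0 < qf A z ->
  bform 1%:M (A *m z) (A *m z) / qf A z <=
  qf A (A *m z) / bform 1%:M (A *m z) (A *m z).
Proof.
move=> z_pos; set s := bform 1%:M (A *m z) (A *m z).
have s_pos : 0 < s by rewrite lt_def bform1_eq0 qf_gt0_mulmx_neq0 ?bform1_ge0.
have Azz : bform A z (A *m z) = s by rewrite bform_mull A_sym.
have := bform_sqr_le (A *m z) A_sym A_psd z_pos; rewrite Azz => cs.
by rewrite ler_pdivrMr // mulrAC ler_pdivlMr // -expr2 mulrC.
Qed.

Lemma qf_conjmx m (S : 'M[R]_(n, m)) y : qf (S^T *m A *m S) y = qf A (S *m y).
Proof. by rewrite /qf !trmx_mul !mulmxA. Qed.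

Lemma qf_grammx m (S : 'M[R]_(n, m)) y :
  qf ((A *m S)^T *m (A *m S)) y = bform 1%:M (A *m (S *m y)) (A *m (S *m y)).
Proof. by rewrite /qf /bform mulmx1 !trmx_mul !mulmxA. Qed.

Lemma algE_output_unit T u : algE_output A T u -> vnorm u = 1.
Proof.
rewrite /algE_output /=; case: eqP => // _ [x [x_pos _ ->]].
by rewrite vnorm_normalize // -mulmxA qf_gt0_mulmx_neq0 // -qf_conjmx.
Qed.

Lemma algE_output_ge T u y : algE_output A T u ->
  0 < qf A (sampleMx R T *m y) ->
  bform 1%:M (A *m (sampleMx R T *m y)) (A *m (sampleMx R T *m y)) /
    qf A (sampleMx R T *m y) <= qf A u.
Proof.
rewrite /algE_output /= -qf_conjmx -qf_grammx; set S := sampleMx R T.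
case: eqP => [-> _|_ [x [x_pos x_max ->]] y_pos]; first by rewrite /qf mulmx0 mul0mx mxE ltxx.
apply: le_trans (x_max y y_pos) _.
rewrite qf_normalize qf_grammx qf_conjmx -mulmxA.
by apply: rayleigh_image_ge; rewrite -qf_conjmx.
Qed.

Lemma algE_output_ge_restrict T u v : algE_output A T u ->
  0 < qf A (restrict T v) ->
  bform 1%:M (A *m restrict T v) (A *m restrict T v) / qf A (restrict T v) <= qf A u.
Proof. by rewrite -sampleMx_restrict; exact: algE_output_ge. Qed.

End RayleighQuotient.

Lemma sum_set_prod (R : comPzRingType) (n : nat) (a b : 'I_n -> R) :
  \sum_(T : {set 'I_n}) \prod_i (if i \in T then a i else b i) = \prod_i (a i + b i).
Proof.
have -> : \prod_i (a i + b i) = \prod_i \sum_(j : bool) (if j then a i else b i).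
  by apply: eq_bigr => i _; rewrite big_bool.
rewrite bigA_distr_bigA (reindex (fun T : {set 'I_n} => [ffun i => i \in T])) /=.
  by apply: eq_bigr => T _; apply: eq_bigr => i _; rewrite ffunE.
exists (fun f : {ffun 'I_n -> bool} => [set i | f i]) => [T _ | f _].
  by apply/setP => i; rewrite inE ffunE.
by apply/ffunP => i; rewrite ffunE inE.
Qed.

Section SampleExpectation.
Variables (R : realType) (n : nat) (p : R).
Implicit Types (T U : {set 'I_n}) (F G : {set 'I_n} -> R).

Definition sampleWeight T : R := p ^+ #|T| * (1 - p) ^+ (n - #|T|).

Definition sampleExp F : R := \sum_T sampleWeight T * F T.

Lemma sampleWeight_ge0 T : 0 <= p <= 1 -> 0 <= sampleWeight T.
Proof. by case/andP => p_ge0 p_le1; rewrite mulr_ge0 ?exprn_ge0 ?subr_ge0. Qed.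

Lemma sampleWeight_prod T : sampleWeight T = \prod_i (if i \in T then p else 1 - p).
Proof.
rewrite /sampleWeight (bigID (mem T)) /=.
rewrite [X in _ = X * _](eq_bigr (fun _ => p)) => [|i ->] //.
rewrite [X in _ = _ * X](eq_bigr (fun _ => 1 - p)) => [|i /negbTE ->] //.
rewrite !prodr_const; congr (_ * _ ^+ _).
have card_n := cardC (mem T); rewrite card_ord in card_n.
by rewrite -[X in (X - _)%N]card_n addKn; apply: eq_card.
Qed.

Lemma probSampleE (P : {set 'I_n} -> bool) :
  probSample p P = sampleExp (fun T => (P T)%:R).
Proof.
rewrite /probSample /sampleExp big_mkcond; apply: eq_bigr => T _.
by case: (P T); rewrite ?mulr1 ?mulr0.
Qed.

Lemma eq_sampleExp F G : F =1 G -> sampleExp F = sampleExp G.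
Proof. by move=> FG; apply: eq_bigr => T _; rewrite FG. Qed.

Lemma sampleExpD F G : sampleExp (fun T => F T + G T) = sampleExp F + sampleExp G.
Proof. by rewrite /sampleExp -big_split; apply: eq_bigr => T _; rewrite mulrDr. Qed.

Lemma sampleExpZ c F : sampleExp (fun T => c * F T) = c * sampleExp F.
Proof. by rewrite /sampleExp mulr_sumr; apply: eq_bigr => T _; rewrite mulrCA. Qed.

Lemma sampleExp_subset U : sampleExp (fun T => (U \subset T)%:R) = p ^+ #|U|.
Proof.
transitivity (\sum_(T : {set 'I_n})
  \prod_i (if i \in T then p else if i \in U then 0 else 1 - p)).
  apply: eq_bigr => T _; rewrite sampleWeight_prod.
  have [/fintype.subsetP UT|/subsetPn [i iU iT]] := boolP (U \subset T); last first.
    by rewrite mulr0 (bigD1 i) //= (negbTE iT) iU mul0r.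
  rewrite mulr1; apply: eq_bigr => i _.
  by case: ifP => // iT; case: ifP => // /UT; rewrite iT.
rewrite sum_set_prod -prodr_const [RHS]big_mkcond /=.
by apply: eq_bigr => i _; case: ifP; rewrite ?addr0 // addrC subrK.
Qed.

Lemma sampleExp_cst c : sampleExp (fun=> c) = c.
Proof.
rewrite /sampleExp -mulr_suml; under eq_bigr do rewrite sampleWeight_prod.
by rewrite sum_set_prod big1 ?mul1r // => i _; rewrite addrC subrK.
Qed.

Lemma sampleExp_mem i : sampleExp (fun T => (i \in T)%:R) = p.
Proof.
rewrite -[RHS]expr1 -(cards1 i) -sampleExp_subset.
by apply: eq_sampleExp => T; rewrite finset.sub1set.
Qed.

Lemma sampleExp_mem2 i j :
  sampleExp (fun T => (i \in T)%:R * (j \in T)%:R) = if i == j then p else p ^+ 2.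
Proof.
transitivity (p ^+ #|[set i; j]|); last by rewrite cards2; case: eqP.
rewrite -sampleExp_subset; apply: eq_sampleExp => T.
by rewrite finset.subUset !finset.sub1set -natrM mulnb.
Qed.

Lemma sampleExp_sum (g : 'I_n -> R) :
  sampleExp (fun T => \sum_i (i \in T)%:R * g i) = p * \sum_i g i.
Proof.
rewrite /sampleExp; under eq_bigr do rewrite mulr_sumr.
rewrite exchange_big mulr_sumr; apply: eq_bigr => i _.
rewrite -[in RHS](sampleExp_mem i) /sampleExp mulr_suml.
by apply: eq_bigr => T _; rewrite mulrA.
Qed.

Lemma sampleExp_sum2 (G : 'I_n -> 'I_n -> R) :
  sampleExp (fun T => \sum_i \sum_j (i \in T)%:R * (j \in T)%:R * G i j)
  = p ^+ 2 * \sum_i \sum_j G i j + (p - p ^+ 2) * \sum_i G i i.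
Proof.
transitivity (\sum_i \sum_j (if i == j then p else p ^+ 2) * G i j).
  rewrite /sampleExp; under eq_bigr do rewrite mulr_sumr.
  rewrite exchange_big; apply: eq_bigr => i _.
  under eq_bigr do rewrite mulr_sumr.
  rewrite exchange_big; apply: eq_bigr => j _.
  rewrite -(sampleExp_mem2 i j) /sampleExp mulr_suml.
  by apply: eq_bigr => T _; rewrite mulrA.
rewrite !mulr_sumr -big_split; apply: eq_bigr => i _ /=.
rewrite (bigD1 i) //= eqxx [in RHS](bigD1 i) //= mulrDr.
rewrite (eq_bigr (fun j => p ^+ 2 * G i j)) => [|j /negbTE]; last by rewrite eq_sym => ->.
rewrite -mulr_sumr; ring.
Qed.

Lemma sampleExp_sqr_dev (g : 'I_n -> R) :
  sampleExp (fun T => (\sum_i (i \in T)%:R * g i - p * \sum_i g i) ^+ 2)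
  = (p - p ^+ 2) * \sum_i g i ^+ 2.
Proof.
have sqr_sum T : (\sum_i (i \in T)%:R * g i) ^+ 2 =
    \sum_i \sum_j (i \in T)%:R * (j \in T)%:R * (g i * g j).
  rewrite expr2 mulr_suml; apply: eq_bigr => i _.
  by rewrite mulr_sumr; apply: eq_bigr => j _; ring.
set S := \sum_i g i.
have sqr_dev T : (\sum_i (i \in T)%:R * g i - p * S) ^+ 2 =
    \sum_i \sum_j (i \in T)%:R * (j \in T)%:R * (g i * g j)
    + (- (2 * p * S)) * (\sum_i (i \in T)%:R * g i) + (p * S) ^+ 2.
  by rewrite -sqr_sum; ring.
rewrite (eq_sampleExp sqr_dev) !sampleExpD sampleExpZ sampleExp_sum2 sampleExp_sum.
rewrite sampleExp_cst -/S.
have -> : \sum_i \sum_j g i * g j = S ^+ 2.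
  by rewrite expr2 mulr_suml; apply: eq_bigr => i _; rewrite mulr_sumr.
under [X in _ = _ * X]eq_bigr do rewrite expr2.
ring.
Qed.

Lemma ler_sampleExp F G : 0 <= p <= 1 -> (forall T, F T <= G T) ->
  sampleExp F <= sampleExp G.
Proof.
by move=> p01 FG; apply: ler_sum => T _; rewrite ler_wpM2l ?sampleWeight_ge0.
Qed.

Lemma probSampleT (P : {set 'I_n} -> bool) : (forall T, P T) -> probSample p P = 1.
Proof.
move=> PT; rewrite probSampleE (eq_sampleExp (G := fun=> 1)) ?sampleExp_cst //.
by move=> T; rewrite PT.
Qed.

Lemma probSample_markov (P : {set 'I_n} -> bool) X : 0 <= p <= 1 ->
  (forall T, 0 <= X T) -> (forall T, X T < 1 -> P T) ->
  1 - sampleExp X <= probSample p P.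
Proof.
move=> p01 X_ge0 XP.
have -> : 1 - sampleExp X = sampleExp (fun T => 1 + (-1) * X T).
  by rewrite sampleExpD sampleExpZ sampleExp_cst mulN1r.
rewrite probSampleE; apply: ler_sampleExp => // T.
have := X_ge0 T; have [/XP -> /=|X_ge1] := ltP (X T) 1; first lra.
by case: (P T) => /=; lra.
Qed.

End SampleExpectation.

Section EigenvectorSampling.
Variables (R : realType) (n : nat) (A : 'M[R]_n) (a : R) (v : 'cV[R]_n).
Hypotheses (A_sym : A^T = A) (A_psd : forall x, 0 <= qf A x)
  (v_eigen : A *m v = a *: v) (v_unit : bform 1%:M v v = 1).

Local Notation mass T := (bform 1%:M v (restrict T v)).
Local Notation excess T := (qf A (restrict T v) - a * mass T ^+ 2).

(* Cauchy-Schwarz against v, where vᵀ(Az) = a vᵀz. *)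
Lemma eigen_rayleigh_ge z e : 0 < a -> 0 <= e -> 0 < bform 1%:M v z ->
  qf A z - a * bform 1%:M v z ^+ 2 <= e * bform 1%:M v z ^+ 2 / 2 ->
  a - e / 2 <= bform 1%:M (A *m z) (A *m z) / qf A z.
Proof.
move=> a_gt0 e_ge0 q_gt0; set q := bform 1%:M v z => excess_le.
have c_ge : a * q ^+ 2 <= qf A z by apply: eigen_bform_sqr_le.
have c_gt0 : 0 < qf A z by apply: lt_le_trans c_ge; rewrite mulr_gt0 ?exprn_gt0.
have vAz : bform 1%:M v (A *m z) = a * q.
  have -> : bform 1%:M v (A *m z) = bform A v z by rewrite /bform mulmx1 mulmxA.
  by rewrite (bformC _ _ A_sym) (bform_eigenr v_eigen) bformC ?trmx1.
have := bform1_sqr_le v (A *m z); rewrite v_unit mul1r vAz => cs.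
rewrite ler_pdivlMr //; apply: le_trans cs.
have slack_ge0 : 0 <= e * q ^+ 2 / 2 - (qf A z - a * q ^+ 2) by rewrite subr_ge0.
have excess_ge0 : 0 <= qf A z - a * q ^+ 2 by rewrite subr_ge0.
have := mulr_ge0 (ltW a_gt0) slack_ge0; have := mulr_ge0 e_ge0 excess_ge0; nra.
Qed.

Lemma restrict_mass T : mass T = \sum_i (i \in T)%:R * v i 0 ^+ 2.
Proof. by rewrite bform1E; apply: eq_bigr => i _; rewrite mxE; ring. Qed.

Lemma sampleExp_mass_dev p :
  sampleExp p (fun T => (mass T - p) ^+ 2) = (p - p ^+ 2) * \sum_i v i 0 ^+ 4.
Proof.
rewrite (@eq_sampleExp _ _ _ _
  (fun T => (\sum_i (i \in T)%:R * v i 0 ^+ 2 - p * \sum_i v i 0 ^+ 2) ^+ 2)).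
  by rewrite sampleExp_sqr_dev; under eq_bigr do rewrite -exprM.
by move=> T; rewrite restrict_mass (sum_eigen_coord_sqr v_unit) mulr1.
Qed.

(* The off-diagonal part of the expectation vanishes because vᵀAv = a (vᵀv)². *)
Lemma sampleExp_excess p :
  sampleExp p (fun T => excess T)
  = (p - p ^+ 2) * \sum_i (A i i * v i 0 ^+ 2 - a * v i 0 ^+ 4).
Proof.
pose G i j := v i 0 * A i j * v j 0 - a * (v i 0 ^+ 2 * v j 0 ^+ 2).
have excessE T : excess T = \sum_i \sum_j (i \in T)%:R * (j \in T)%:R * G i j.
  rewrite qfE bformE restrict_mass expr2 mulr_suml mulr_sumr -sumrB.
  apply: eq_bigr => i _; rewrite mulr_sumr mulr_sumr -sumrB.
  by apply: eq_bigr => j _; rewrite !mxE /G; ring.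
rewrite (eq_sampleExp _ excessE) sampleExp_sum2.
have -> : \sum_i \sum_j G i j = 0.
  have -> : \sum_i \sum_j G i j
      = bform A v v - a * \sum_i (v i 0 ^+ 2 * \sum_j v j 0 ^+ 2).
    rewrite bformE mulr_sumr -sumrB; apply: eq_bigr => i _.
    by rewrite mulr_sumr mulr_sumr -sumrB.
  rewrite (sum_eigen_coord_sqr v_unit); under eq_bigr do rewrite mulr1.
  by rewrite (sum_eigen_coord_sqr v_unit) (bform_eigenr v_eigen) v_unit mulr1 subrr.
by rewrite mulr0 add0r; congr (_ * _); apply: eq_bigr => i _; rewrite /G; ring.
Qed.

Lemma algE_output_ge_of_sample e p b T u : 0 < e -> 0 < a -> b <= a - e / 2 ->
  0 < p -> 4 / p ^+ 2 * (mass T - p) ^+ 2 + 8 / (e * p ^+ 2) * excess T < 1 ->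
  algE_output A T u -> b <= qf A u.
Proof.
move=> e_gt0 a_gt0 b_le p_gt0 score_lt1 u_out.
have p2_gt0 : 0 < p ^+ 2 by rewrite exprn_gt0.
have excess_ge0 : 0 <= excess T by rewrite subr_ge0; exact: eigen_bform_sqr_le.
have dev_lt : 4 * (mass T - p) ^+ 2 < p ^+ 2.
  rewrite -[X in _ < X]mul1r -ltr_pdivrMr // -mulrAC.
  have := mulr_ge0 (divr_ge0 (ler0n R 8) (ltW (mulr_gt0 e_gt0 p2_gt0))) excess_ge0.
  lra.
have excess_lt : 8 * excess T < e * p ^+ 2.
  rewrite -[X in _ < X]mul1r -ltr_pdivrMr ?mulr_gt0 // -mulrAC.
  have := mulr_ge0 (divr_ge0 (ler0n R 4) (ltW p2_gt0)) (sqr_ge0 (mass T - p)).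
  lra.
have mass_gt : p / 2 < mass T.
  rewrite ltNge; apply/negP => mass_le.
  have factors_ge0 : 0 <= (3 * p - 2 * mass T) * (p - 2 * mass T).
    by apply: mulr_ge0; lra.
  nra.
have mass_gt0 : 0 < mass T by apply: lt_trans mass_gt; rewrite divr_gt0.
have excess_le : excess T <= e * mass T ^+ 2 / 2.
  have sqr_le : 0 <= (2 * mass T - p) * (2 * mass T + p) by apply: mulr_ge0; lra.
  have := mulr_ge0 (ltW e_gt0) sqr_le; nra.
have qz_gt0 : 0 < qf A (restrict T v).
  apply: lt_le_trans (eigen_bform_sqr_le A_sym A_psd v_eigen v_unit _).
  by rewrite mulr_gt0 // exprn_gt0.
apply: le_trans b_le (le_trans _ (algE_output_ge_restrict A_sym A_psd u_out qz_gt0)).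
by apply: eigen_rayleigh_ge => //; exact: ltW.
Qed.

Hypothesis A_bounded : forall i j, `|A i j| <= 1.

Lemma sum_eigen_coord_pow4_le : a * \sum_i v i 0 ^+ 4 <= 1.
Proof.
rewrite -(sum_eigen_coord_sqr v_unit) mulr_sumr; apply: ler_sum => i _.
have := eigen_coord_sqr_le_diag A_sym A_psd v_eigen v_unit i.
have := diag_le1 A_bounded i; have := sqr_ge0 (v i 0).
rewrite (_ : 4 = 2 + 2)%N // exprD; nra.
Qed.

Lemma sum_diag_excess_le : 0 <= a -> \sum_i (A i i * v i 0 ^+ 2 - a * v i 0 ^+ 4) <= 1.
Proof.
move=> a_ge0; rewrite -(sum_eigen_coord_sqr v_unit); apply: ler_sum => i _.
have := diag_le1 A_bounded i; have := sqr_ge0 (v i 0).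
have := mulr_ge0 a_ge0 (exprn_even_ge0 (v i 0) (isT : ~~ odd 4)); nra.
Qed.

Lemma sampleExp_score_le e p : 0 < e -> e / 2 < a -> 0 < p -> p <= 1 ->
  64 * (1 - p) <= p * e ->
  4 / p ^+ 2 * sampleExp p (fun T => (mass T - p) ^+ 2)
  + 8 / (e * p ^+ 2) * sampleExp p (fun T => excess T) <= 1 / 4.
Proof.
move=> e_gt0 a_gt p_gt0 p_le1 p_large; rewrite sampleExp_mass_dev sampleExp_excess.
set s4 := \sum_i v i 0 ^+ 4; set t := \sum_i (_ - _); set r := (1 - p) / p.
have -> : 4 / p ^+ 2 * ((p - p ^+ 2) * s4) + 8 / (e * p ^+ 2) * ((p - p ^+ 2) * t)
    = r * (4 * s4 + 8 * t / e).
  by rewrite /r; field; rewrite !gt_eqF.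
have r_ge0 : 0 <= r by rewrite /r divr_ge0 ?subr_ge0 // ltW.
have r_le : r <= e / 64 by rewrite ler_pdivrMr // mulrAC ler_pdivlMr //; lra.
have s4_ge0 : 0 <= s4 by apply: sumr_ge0 => i _; rewrite exprn_even_ge0.
have bracket_le : 4 * s4 + 8 * t / e <= 16 / e.
  rewrite ler_pdivlMr // mulrDl divfK ?gt_eqF //.
  have a_ge0 : 0 <= a by apply: le_trans (ltW a_gt); rewrite divr_ge0 ?ltW.
  have := sum_eigen_coord_pow4_le; have := sum_diag_excess_le a_ge0.
  rewrite -/s4 -/t; nra.
apply: le_trans (ler_wpM2l r_ge0 bracket_le) _.
apply: le_trans (ler_wpM2r (divr_ge0 (ler0n R 16) (ltW e_gt0)) r_le) _.
by rewrite (_ : e / 64 * (16 / e) = 1 / 4) //; field; rewrite gt_eqF.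
Qed.

Lemma algE_success_prob (e p b : R) (u : {set 'I_n} -> 'cV[R]_n) :
  0 < e -> e / 2 < a -> b <= a - e / 2 ->
  0 < p <= 1 -> 64 * (1 - p) <= p * e ->
  (forall T, algE_output A T (u T)) ->
  3 / 4 <= probSample p (fun T => `[< vnorm (u T) = 1 /\ b <= qf A (u T) >]).
Proof.
move=> e_gt0 a_gt b_le /andP[p_gt0 p_le1] p_large u_out.
have a_gt0 : 0 < a by apply: lt_trans a_gt; rewrite divr_gt0.
pose score T := 4 / p ^+ 2 * (mass T - p) ^+ 2 + 8 / (e * p ^+ 2) * excess T.
have score_ge0 T : 0 <= score T.
  have := eigen_bform_sqr_le A_sym A_psd v_eigen v_unit (restrict T v).
  rewrite -subr_ge0 => excess_ge0.
  by rewrite addr_ge0 // mulr_ge0 ?sqr_ge0 // divr_ge0 ?ltW ?mulr_gt0 ?exprn_gt0.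
have success T : score T < 1 -> `[< vnorm (u T) = 1 /\ b <= qf A (u T) >].
  move=> score_lt1; apply/asboolP; split; first exact: algE_output_unit (u_out T).
  exact: (algE_output_ge_of_sample e_gt0 a_gt0 b_le p_gt0 score_lt1).
have p01 : 0 <= p <= 1 by rewrite ltW.
apply: le_trans (probSample_markov p01 score_ge0 success).
rewrite /score sampleExpD !sampleExpZ.
have := sampleExp_score_le e_gt0 a_gt p_gt0 p_le1 p_large; lra.
Qed.

End EigenvectorSampling.

Lemma lambda1_approx (R : realType) (n : nat) (A : 'M[R]_n) (d : R) :
  A^T = A -> (forall x, 0 <= qf A x) -> (forall i j, `|A i j| <= 1) ->
  0 < lambda1 A -> 0 < d -> exists2 a, eigenvalue A a & lambda1 A - d < a.
Proof.
move=> A_sym A_psd A_bounded l_gt0 d_gt0.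
have [a a_eig] : exists a, eigenvalue A a.
  apply: contrapT => no_eig; move: l_gt0; rewrite /lambda1.
  suff -> : [set a : R | eigenvalue A a]%classic = set0 by rewrite sup0 ltxx.
  by apply/seteqP; split => x //= x_eig; apply: no_eig; exists x.
apply: sup_adherent d_gt0 _; split; first by exists a.
exists n%:R => b /= /(eigenvalue_unit_eigenvector A_sym) [w [w_eigen w_unit]].
by have := eigenvalue_le_dim A_sym A_psd w_eigen w_unit A_bounded.
Qed.

Lemma sample_rate_bounds (R : realType) (e : R) : 0 < e ->
  0 < Num.min 1 (64 / e) <= 1 /\ 64 * (1 - Num.min 1 (64 / e)) <= Num.min 1 (64 / e) * e.
Proof.
move=> e_gt0; have := divr_gt0 (ltr0n R 64) e_gt0.
case: (leP 1 (64 / e)) => [|/ltW] h h_gt0; first by split; lra.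
by rewrite divfK ?gt_eqF // h h_gt0; split => //; lra.
Qed.

Theorem mainTheorem4 (R : realType) :
  exists c : R, 0 < c /\
  forall (n : nat) (eps : R) (A : 'M[R]_n),
    (0 < n)%N -> 0 < eps < 1 ->
    A^T = A ->
    (forall v : 'cV[R]_n, 0 <= qf A v) ->
    (forall i j, `|A i j| <= 1) ->
    let p := Num.min 1 (c / (eps * n%:R)) in
    forall u : {set 'I_n} -> 'cV[R]_n,
      (forall T, algE_output A T (u T)) ->
      3 / 4 <= probSample p
                 (fun T => `[< vnorm (u T) = 1 /\ qf A (u T) >= lambda1 A - eps * n%:R >]).
Proof.
exists 64; split => // n eps A n_gt0 /andP[eps_gt0 _] A_sym A_psd A_bounded p u u_out.
have e_gt0 : 0 < eps * n%:R by rewrite mulr_gt0 ?ltr0n.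
have [p_range p_large] := sample_rate_bounds e_gt0.
have [small|large] := leP (lambda1 A) (eps * n%:R).
  rewrite probSampleT; first lra.
  move=> T; apply/asboolP; split; first exact: algE_output_unit (u_out T).
  by apply: le_trans (A_psd (u T)); rewrite subr_le0.
have half_gt0 : 0 < eps * n%:R / 2 by rewrite divr_gt0.
have [a a_eig a_near] :=
  lambda1_approx A_sym A_psd A_bounded (lt_trans e_gt0 large) half_gt0.
have [v [v_eigen v_unit]] := eigenvalue_unit_eigenvector A_sym a_eig.
by apply: (algE_success_prob A_sym A_psd v_eigen v_unit A_bounded e_gt0) => //; lra.
Qed.
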